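(* Let $\mathcal S\in\Sigma^n$ be a string over an integer alphabet $\Sigma$ and let $\pi:[n]\to[n]$ be an order-preserving permutation for $\mathcal S$. Then $\mathcal S$ can be compressed in $O(|\mathrm{PDA}_\pi|\log n)$ bits of space, i.e., there is a representation of $\mathcal S$ of $O(|\mathrm{PDA}_\pi|\log n)$ bits from which $\mathcal S$ can be reconstructed.
   Context: For a string $\mathcal S$ of length $n$ and $i\neq j$, $\mathrm{rlce}(i,j)$ denotes the length of the longest common prefix of $\mathcal S[i,n]$ and $\mathcal S[j,n]$. A permutation $\pi:[n]\to[n]$ is order-preserving for $\mathcal S$ if for all $i,j\in[n-1]$, $\pi(i)<\pi(j)$ and $\mathcal S[i,i+1]=\mathcal S[j,j+1]$ imply $\pi(i+1)<\pi(j+1)$. The generalized longest previous factor array is $\mathrm{LPF}_\pi[i]=0$ if $\pi(i)=1$ and $\mathrm{LPF}_\pi[i]=\max_{\pi(j)<\pi(i)}\mathrm{rlce}(j,i)$ otherwise. The path decomposition array $\mathrm{PDA}_\pi$ is the set $\{i+\mathrm{LPF}_\pi[i]: i\in[n]\}$ (without duplicates) sorted by the colexicographic order of the prefixes $\mathcal S[1,j]$; $|\mathrm{PDA}_\pi|$ is its number of elements. *)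

From mathcomp Require Import all_boot fingroup perm.
Unset Printing Implicit Defensive.

(* Strings are [seq nat] (integer alphabet); positions are 0-based internally:
   position i : 'I_n of the code corresponds to position i+1 of the paper. *)

Fixpoint lcp (s t : seq nat) : nat :=
  match s, t with
  | x :: s', y :: t' => if x == y then (lcp s' t').+1 else 0
  | _, _ => 0
  end.

Definition rlce (S : seq nat) (i j : nat) : nat := lcp (drop i S) (drop j S).

Definition order_preserving (S : seq nat) (pi : {perm 'I_(size S)}) : Prop :=
  forall (i j : 'I_(size S)) (Hi : i.+1 < size S) (Hj : j.+1 < size S),
    pi i < pi j ->
    nth 0 S i = nth 0 S j -> nth 0 S i.+1 = nth 0 S j.+1 ->
    pi (Ordinal Hi) < pi (Ordinal Hj).

(* generalized longest previous factor array; pi i = 0 is the paper's pi(i)=1 *)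
Definition LPF (S : seq nat) (pi : {perm 'I_(size S)}) (i : 'I_(size S)) : nat :=
  if (pi i : nat) == 0 then 0
  else \max_(j : 'I_(size S) | pi j < pi i) rlce S j i.

Fixpoint lex_le (s t : seq nat) : bool :=
  match s, t with
  | [::], _ => true
  | _ :: _, [::] => false
  | x :: s', y :: t' => (x < y) || ((x == y) && lex_le s' t')
  end.

(* colexicographic order of the prefixes S[1,j] and S[1,k] (paper's 1-based j,k) *)
Definition colex_le (S : seq nat) (j k : nat) : bool :=
  lex_le (rev (take j S)) (rev (take k S)).

(* PDA_pi : the values (paper's 1-based) i + LPF_pi[i], without duplicates,
   sorted by colexicographic order of the prefixes S[1,j]. *)
Definition PDA (S : seq nat) (pi : {perm 'I_(size S)}) : seq nat :=
  sort (colex_le S)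
    (undup [seq (val i).+1 + LPF S pi i | i <- enum 'I_(size S)]).

From Pilot Require Import Defs.
From mathcomp Require Import all_boot fingroup perm.
From mathcomp Require Import zify.

(* If LPF_pi[i] = l > 0, some j with pi j < pi i satisfies
   S[j, j+l) = S[i, i+l), and order preservation propagates pi (j+t) < pi (i+t)
   along this common factor.  Hence S is determined by phrases: a literal
   letter at every i with l = 0, and for every endpoint i + l with l > 0 one
   copy phrase [i, i+l) <- [j, j+l) (the leftmost start suffices, as phrases
   with a common endpoint are nested).  Reading a position through its phrase
   strictly decreases pi, so decoding terminates.  Literals and copy phrases
   each have pairwise distinct endpoints, so there are at most 2 |PDA_pi| of
   them, each written with three numbers of O(log n) bits. *)

Fixpoint bits_of (w x : nat) : seq bool :=
  if w is w'.+1 then odd x :: bits_of w' x./2 else [::].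

Fixpoint nat_of_bits (s : seq bool) : nat :=
  if s is b :: s' then b + (nat_of_bits s').*2 else 0.

Lemma size_bits_of w x : size (bits_of w x) = w.
Proof. by elim: w x => //= w IHw x; rewrite IHw. Qed.

Lemma bits_ofK w x : x < 2 ^ w -> nat_of_bits (bits_of w x) = x.
Proof.
elim: w x => [|w IHw] x /=; first by rewrite ltnS leqn0 => /eqP ->.
by rewrite expnS mul2n -ltn_half_double => /IHw ->; rewrite odd_double_half.
Qed.

Definition chunks {T : Type} (k : nat) (s : seq T) : seq (seq T) :=
  reshape (nseq (size s %/ k) k) s.

Lemma chunks_flatten {T : Type} k (ss : seq (seq T)) :
  0 < k -> all (fun s => size s == k) ss -> chunks k (flatten ss) = ss.
Proof.
move=> k_gt0 sizes_k.
have shape_ss : shape ss = nseq (size ss) k.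
  by elim: ss sizes_k => //= s ss IHss /andP [/eqP -> /IHss ->].
by rewrite /chunks size_flatten shape_ss sumn_nseq mulKn // -shape_ss flattenK.
Qed.

Definition code_fixed (K : nat) (L : seq nat) : seq bool :=
  flatten (map (bits_of K) L).

Definition decode_fixed (K : nat) (b : seq bool) : seq nat :=
  map nat_of_bits (chunks K b).

Lemma size_code_fixed K L : size (code_fixed K L) = K * size L.
Proof.
elim: L => [|x L IHL]; first by rewrite muln0.
by rewrite /code_fixed /= size_cat size_bits_of -/(code_fixed K L) IHL mulnS.
Qed.

Lemma code_fixedK K L :
  0 < K -> all (fun x => x < 2 ^ K) L -> decode_fixed K (code_fixed K L) = L.
Proof.
move=> K_gt0 /allP L_small; rewrite /decode_fixed chunks_flatten //; last first.
  by apply/allP=> _ /mapP [x _ ->]; rewrite size_bits_of.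
rewrite -map_comp -[RHS]map_id; apply/eq_in_map => x /L_small; exact: bits_ofK.
Qed.

(* A phrase [(a, l, v)] with [l > 0] says that positions [a <= p < a + l]
   carry the letter found at position [v + (p - a)]; with [l = 0] it says
   that position [a] carries the letter [v]. *)
Definition phrase : Type := nat * nat * nat.

Definition literal_at (R : seq phrase) (p : nat) : option nat :=
  ohead [seq t.2 | t <- R & (t.1.1 == p) && (t.1.2 == 0)].

Definition source_at (R : seq phrase) (p : nat) : option nat :=
  ohead [seq t.2 + (p - t.1.1) | t <- R & t.1.1 <= p < t.1.1 + t.1.2].

Fixpoint resolve (R : seq phrase) (fuel p : nat) : nat :=
  if fuel is fuel'.+1 then
    if literal_at R p is Some c then c
    else if source_at R p is Some q then resolve R fuel' q else 0
  else 0.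

Lemma ohead_mem {T : eqType} {s : seq T} {x : T} : ohead s = Some x -> x \in s.
Proof. by case: s => //= y s [->]; rewrite mem_head. Qed.

Lemma ohead_None {T : eqType} {s : seq T} (x : T) : ohead s = None -> x \notin s.
Proof. by case: s. Qed.

Section Resolve.

Context {S : seq nat} {rank : nat -> nat} {R : seq phrase}.

Hypothesis literalP : forall a v, (a, 0, v) \in R -> v = nth 0 S a.

Hypothesis copyP : forall a l v, (a, l, v) \in R -> forall p, a <= p < a + l ->
  [/\ v + (p - a) < size S, nth 0 S (v + (p - a)) = nth 0 S p
    & rank (v + (p - a)) < rank p].

Hypothesis coverP : forall p, p < size S ->
  (exists v, (p, 0, v) \in R) \/ exists a l v, (a, l, v) \in R /\ a <= p < a + l.

Lemma resolve_nth fuel p : p < size S -> rank p < fuel -> resolve R fuel p = nth 0 S p.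
Proof.
elim: fuel p => // fuel IHfuel p lt_p /= lt_rank.
case lit: (literal_at R p) => [c|].
  have /mapP [[[a l] v]] := ohead_mem lit.
  by rewrite mem_filter /= => /andP [/andP [/eqP -> /eqP ->] /literalP <-] ->.
case src: (source_at R p) => [q|].
  have /mapP [[[a l] v]] := ohead_mem src.
  rewrite mem_filter /= => /andP [range_p /copyP/(_ p range_p) [lt_q eq_q lt_rank_q]].
  by move=> ->; rewrite IHfuel // ?eq_q //; lia.
exfalso; case: (coverP _ lt_p) => [[v pv] | [a [l [v [alv range_p]]]]].
  by move/negP: (ohead_None v lit); apply; apply/mapP; exists (p, 0, v);
     rewrite // mem_filter /= !eqxx.
by move/negP: (ohead_None (v + (p - a)) src); apply; apply/mapP; exists (a, l, v);
   rewrite // mem_filter /= range_p.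
Qed.

Lemma mkseq_resolve : (forall p, p < size S -> rank p < size S) ->
  mkseq (resolve R (size S)) (size S) = S.
Proof.
move=> rank_lt; apply: (@eq_from_nth _ 0) => [|p]; rewrite size_mkseq // => lt_p.
by rewrite nth_mkseq // resolve_nth // rank_lt.
Qed.

End Resolve.

Definition seq_of_phrase (t : phrase) : seq nat := [:: t.1.1; t.1.2; t.2].

Definition phrase_of_seq (s : seq nat) : phrase := (nth 0 s 0, nth 0 s 1, nth 0 s 2).

Lemma seq_of_phraseK : cancel seq_of_phrase phrase_of_seq.
Proof. by case=> [[]]. Qed.

(* The unary prefix [1^w 0] announces the block width [w * k], so that a
   single decoder serves all lengths. *)
Definition encode (k w n : nat) (R : seq phrase) : seq bool :=
  nseq w true ++ false :: code_fixed (w * k) (n :: flatten (map seq_of_phrase R)).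

Definition decode (k : nat) (b : seq bool) : seq nat :=
  let w := find negb b in
  if decode_fixed (w * k) (drop w.+1 b) is n :: s
  then mkseq (resolve (map phrase_of_seq (chunks 3 s)) n) n
  else [::].

Lemma size_encode k w n R : size (encode k w n R) = w + (w * k * (3 * size R).+1).+1.
Proof.
rewrite size_cat size_nseq /= size_code_fixed /= size_flatten.
suff -> : shape (map seq_of_phrase R) = nseq (size R) 3 by rewrite sumn_nseq mulnC.
by elim: R => //= t R ->.
Qed.

Lemma encodeK k w n R : 0 < w * k ->
  all (fun x => x < 2 ^ (w * k)) (n :: flatten (map seq_of_phrase R)) ->
  decode k (encode k w n R) = mkseq (resolve R n) n.
Proof.
move=> kw_gt0 small.
have find_prefix s : find negb (nseq w true ++ false :: s) = w.
  by elim: w {kw_gt0 small} => //= w ->.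
have drop_prefix s : drop w.+1 (nseq w true ++ false :: s) = s.
  by elim: w {kw_gt0 small find_prefix} => /= [|w //]; rewrite drop0.
rewrite /decode /encode find_prefix drop_prefix code_fixedK // chunks_flatten //.
  by rewrite mapK //; exact: seq_of_phraseK.
by rewrite all_map; apply/allP.
Qed.

Lemma lcp_nth s t k : k < lcp s t ->
  [/\ k < size s, k < size t & nth 0 s k = nth 0 t k].
Proof.
elim: s t k => [|x s IHs] [|y t] k //=.
by case: eqP => // ->; case: k => [|k] //=; rewrite ltnS => /IHs.
Qed.

Lemma lcp_leq_size s t : lcp s t <= size t.
Proof. by elim: s t => [|x s IHs] [|y t] //=; case: eqP => // _; rewrite ltnS. Qed.

Section Phrases.

Context {S : seq nat} (pi : {perm 'I_(size S)}).

Local Notation n := (size S).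
Local Notation LPF := (LPF S pi).

Definition rank (p : nat) : nat :=
  if insub p is Some i then val (pi i) else 0.

Lemma rank_ord (i : 'I_n) : rank i = pi i.
Proof. by rewrite /rank valK. Qed.

Lemma rank_lt p : p < n -> rank p < n.
Proof. by move=> lt_p; rewrite -[p]/(val (Ordinal lt_p)) rank_ord. Qed.

Lemma LPF_leq (i : 'I_n) : i + LPF i <= n.
Proof.
have le_in : i <= n := ltnW (ltn_ord i).
rewrite /Defs.LPF; case: eqP => _; first by rewrite addn0.
rewrite -leq_subRL //; apply/bigmax_leqP => j _.
by rewrite -size_drop lcp_leq_size.
Qed.

Definition lpf_source (i : 'I_n) : 'I_n :=
  odflt i [pick j | (pi j < pi i) && (rlce S j i == LPF i)].

Lemma lpf_sourceP (i : 'I_n) : 0 < LPF i ->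
  pi (lpf_source i) < pi i /\ rlce S (lpf_source i) i = LPF i.
Proof.
move=> LPF_gt0; have [j lt_j eq_j] : exists2 j, pi j < pi i & rlce S j i = LPF i.
  move: LPF_gt0; rewrite /Defs.LPF; case: eqP => // _.
  case: (pickP [pred j | pi j < pi i]) => [j0 lt_j0 | none]; last by rewrite big_pred0.
  by rewrite (bigmax_eq_arg j0) //; case: arg_maxnP => // j lt_j _ _; exists j.
rewrite /lpf_source; case: pickP => [k /andP [? /eqP ?] | /(_ j)] //=.
by rewrite lt_j eq_j eqxx.
Qed.

Definition phrase_end (i : 'I_n) : nat := val i + LPF i.

Definition leftmost (i : 'I_n) : bool :=
  [forall j : 'I_n, (j < i) && (0 < LPF j) ==> (phrase_end j != phrase_end i)].

Definition literal_phrases : seq phrase :=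
  [seq (val i, 0, nth 0 S i) | i : 'I_n <- enum 'I_n & LPF i == 0].

Definition copy_phrases : seq phrase :=
  [seq (val i, LPF i, val (lpf_source i))
    | i : 'I_n <- enum 'I_n & (0 < LPF i) && leftmost i].

Definition phrases : seq phrase := literal_phrases ++ copy_phrases.

Lemma count_leq_size_PDA (P : pred 'I_n) :
  {in P &, injective phrase_end} -> count P (enum 'I_n) <= size (PDA S pi).
Proof.
move=> end_inj; rewrite -size_filter /PDA size_sort.
rewrite -(size_map (fun i : 'I_n => (val i).+1 + LPF i)); apply: uniq_leq_size.
  rewrite map_inj_in_uniq; first exact/filter_uniq/enum_uniq.
  move=> x y; rewrite !mem_filter => /andP [Px _] /andP [Py _] eq_xy.
  by apply: end_inj => //; rewrite /phrase_end; lia.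
by move=> _ /mapP [x _ ->]; rewrite mem_undup; apply/mapP; exists x; rewrite ?mem_enum.
Qed.

Lemma size_phrases : size phrases <= 2 * size (PDA S pi).
Proof.
rewrite size_cat !size_map !size_filter mul2n -addnn leq_add //.
  apply: count_leq_size_PDA => x y /eqP x0 /eqP y0.
  by rewrite /phrase_end x0 y0 !addn0; exact: val_inj.
apply: count_leq_size_PDA => x y /andP [x_gt0 x_left] /andP [y_gt0 y_left] eq_xy.
case: (ltngtP x y) => [lt_xy | lt_yx | ]; last exact: val_inj.
  by move/forallP/(_ x): y_left; rewrite lt_xy x_gt0 eq_xy eqxx.
by move/forallP/(_ y): x_left; rewrite lt_yx y_gt0 eq_xy eqxx.
Qed.

Lemma size_PDA_gt0 : 0 < n -> 0 < size (PDA S pi).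
Proof.
move=> n_gt0; rewrite /PDA size_sort -has_predT; apply/hasP.
exists ((val (Ordinal n_gt0)).+1 + LPF (Ordinal n_gt0)) => //.
by rewrite mem_undup; apply/mapP; exists (Ordinal n_gt0); rewrite ?mem_enum.
Qed.

Lemma phrases_literal a v : (a, 0, v) \in phrases -> v = nth 0 S a.
Proof.
rewrite mem_cat => /orP [] /mapP [i]; rewrite mem_filter.
  by move=> _ [-> ->].
by move=> /andP [/andP [LPF_gt0 _] _] [_ LPF0 _]; rewrite -LPF0 in LPF_gt0.
Qed.

Lemma phrases_cover p : p < n ->
  (exists v, (p, 0, v) \in phrases) \/
  exists a l v, (a, l, v) \in phrases /\ a <= p < a + l.
Proof.
move=> lt_p; pose i := Ordinal lt_p.
have [LPF0 | LPF_gt0] := posnP (LPF i).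
  left; exists (nth 0 S p); rewrite mem_cat; apply/orP; left.
  by apply/mapP; exists i; rewrite // mem_filter LPF0 mem_enum.
right; pose P k := (0 < LPF k) && (phrase_end k == phrase_end i).
have Pi : P i by rewrite /P LPF_gt0 eqxx.
have [k /andP [k_gt0 /eqP end_k] k_min] := arg_minnP val Pi.
exists (val k), (LPF k), (val (lpf_source k)); split.
  rewrite mem_cat; apply/orP; right; apply/mapP; exists k => //.
  rewrite mem_filter mem_enum k_gt0 andbT /=.
  apply/forallP=> j; apply/implyP=> /andP [lt_jk j_gt0]; apply/negP=> /eqP end_j.
  by have := k_min j; rewrite /P j_gt0 end_j end_k eqxx leqNgt lt_jk => /(_ isT).
have := k_min i Pi; move: end_k; rewrite /phrase_end /=; lia.
Qed.

Lemma phrase_entries_lt m : all (fun x => x < m) S ->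
  all (fun x => x < maxn n.+1 m) (flatten (map seq_of_phrase phrases)).
Proof.
move=> /allP letters_lt; apply/allP=> x /flattenP [_ /mapP [t t_in ->]].
have lt_max y : (y <= n) || (y < m) -> y < maxn n.+1 m by rewrite leq_max ltnS.
have ord_le (j : 'I_n) : j <= n := ltnW (ltn_ord j).
have LPF_le (j : 'I_n) : LPF j <= n by have := LPF_leq j; lia.
move: t_in; rewrite mem_cat => /orP [] /mapP [i _ ->];
  rewrite !inE => /or3P [] /eqP ->; apply: lt_max; rewrite ?ord_le ?LPF_le //.
by rewrite letters_lt ?orbT ?mem_nth.
Qed.

Hypothesis pi_op : order_preserving S pi.

Lemma rank_succ_lt p q : p.+1 < n -> q.+1 < n -> rank p < rank q ->
  nth 0 S p = nth 0 S q -> nth 0 S p.+1 = nth 0 S q.+1 -> rank p.+1 < rank q.+1.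
Proof.
move=> lt_p1 lt_q1; have lt_p := ltnW lt_p1; have lt_q := ltnW lt_q1.
rewrite -[p]/(val (Ordinal lt_p)) -[q]/(val (Ordinal lt_q)) !rank_ord.
rewrite -[p.+1]/(val (Ordinal lt_p1)) -[q.+1]/(val (Ordinal lt_q1)) !rank_ord.
exact: pi_op.
Qed.

Lemma rlce_rank_lt j i t : rank j < rank i -> t < rlce S j i ->
  [/\ j + t < n, i + t < n, nth 0 S (j + t) = nth 0 S (i + t)
    & rank (j + t) < rank (i + t)].
Proof.
move=> lt_ji; have common t' : t' < rlce S j i ->
    [/\ j + t' < n, i + t' < n & nth 0 S (j + t') = nth 0 S (i + t')].
  by case/lcp_nth; rewrite !size_drop !nth_drop => *; split=> //; lia.
elim: t => [|t IHt] lt_t; have [lt_jt lt_it eq_t] := common _ lt_t.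
  by split=> //; rewrite !addn0.
have [lt_jt' lt_it' eq_t' rank_t] := IHt (ltnW lt_t).
by split=> //; rewrite !addnS in lt_jt lt_it eq_t *; exact: rank_succ_lt.
Qed.

Lemma phrases_copy a l v : (a, l, v) \in phrases -> forall p, a <= p < a + l ->
  [/\ v + (p - a) < n, nth 0 S (v + (p - a)) = nth 0 S p & rank (v + (p - a)) < rank p].
Proof.
rewrite mem_cat => /orP [] /mapP [i]; rewrite mem_filter.
  by move=> _ [-> -> _] p; rewrite addn0; lia.
move=> /andP [/andP [LPF_gt0 _] _] [-> -> ->] p /andP [le_ip lt_p].
have [lt_src rlce_src] := lpf_sourceP i LPF_gt0.
have lt_t : p - i < rlce S (lpf_source i) i by rewrite rlce_src; lia.
rewrite -!rank_ord in lt_src.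
by have [] := rlce_rank_lt _ _ _ lt_src lt_t; rewrite subnKC.
Qed.

End Phrases.

Lemma maxn_exp_leq n d w : n < 2 ^ w -> maxn n.+1 (n ^ d) <= 2 ^ (w * d.+1).
Proof.
move=> lt_n; rewrite geq_max (leq_trans lt_n) ?leq_exp2l ?leq_pmulr //=.
have le_nd : n ^ d <= (2 ^ w) ^ d by case: d => // d; rewrite leq_exp2r // ltnW.
by rewrite (leq_trans le_nd) // -expnM leq_exp2l //; nia.
Qed.

Theorem theorem16 :
  forall d : nat,
  exists (D : seq bool -> seq nat) (c : nat),
  forall (S : seq nat) (pi : {perm 'I_(size S)}),
    all (fun a => a < (size S) ^ d) S ->
    order_preserving S pi ->
    exists b : seq bool,
      size b <= c * size (PDA S pi) * (trunc_log 2 (size S)).+1 /\ D b = S.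
Proof.
move=> d; exists (decode d.+1), (2 + 7 * d.+1) => S pi letters_lt pi_op.
have [S0 | n_gt0] := posnP (size S).
  by exists [::]; rewrite [RHS](size0nil S0).
set w := (trunc_log 2 (size S)).+1.
exists (encode d.+1 w (size S) (phrases pi)); split.
  have := size_phrases pi; have := size_PDA_gt0 pi n_gt0.
  rewrite size_encode; nia.
rewrite encodeK ?muln_gt0 //.
  exact: mkseq_resolve (phrases_literal pi) (phrases_copy pi pi_op)
    (phrases_cover pi) (rank_lt pi).
have width := maxn_exp_leq _ d _ (trunc_log_ltn (size S) (isT : 1 < 2)).
apply/allP=> x; rewrite inE => /predU1P [-> | x_in]; apply: leq_trans width.
  exact: leq_maxl.
exact: (allP (phrase_entries_lt pi _ letters_lt)).
Qed.
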